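(* Let $D=(D_1,D_2)\in\mathcal{U}(n,s_1^ps_2^q)$, where $D_1\in\mathcal{U}(n,s_1^p)$ consists of $p$ qualitative factors with $s_1$ levels and $D_2\in\mathcal{U}(n,s_2^q)$ consists of $q$ quantitative factors with $s_2$ levels. If $s_2$ is odd, then $\mathrm{QQD}^2(D)\ge LB_{odd}$, where \begin{align*}LB_{odd}=&-\left(\frac{5s_1+1}{4s_1}\right)^p\left(\frac43\right)^q+\frac1n\left(\frac32\right)^{p+q}+\frac{n-1}{n}\left(\frac54\right)^p\left(\frac65\right)^{\frac{p(n-s_1)}{s_1(n-1)}}\left(\frac32\right)^{\frac{q(n-s_2)}{s_2(n-1)}}\prod_{i=1}^{(s_2-1)/2}\left(\frac32-\frac{2i(2s_2-2i)}{4s_2^2}\right)^{\frac{2nq}{s_2(n-1)}};\end{align*} if $s_2$ is even, then $\mathrm{QQD}^2(D)\ge LB_{even}$, where \begin{align*}LB_{even}=&-\left(\frac{5s_1+1}{4s_1}\right)^p\left(\frac43\right)^q+\frac1n\left(\frac32\right)^{p+q}+\frac{n-1}{n}\left(\frac54\right)^p\left(\frac65\right)^{\frac{p(n-s_1)}{s_1(n-1)}}\left(\frac32\right)^{\frac{q(n-s_2)}{s_2(n-1)}}\left(\frac54\right)^{\frac{nq}{s_2(n-1)}}\prod_{i=1}^{(s_2/2)-1}\left(\frac32-\frac{2i(2s_2-2i)}{4s_2^2}\right)^{\frac{2nq}{s_2(n-1)}}.\end{align*}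
   Context: A U-type design in $\mathcal{U}(n,s_1^{p}s_2^{q})$ is an $n\times(p+q)$ matrix whose first $p$ columns each take every value in $\{0,\dots,s_1-1\}$ equally often and whose last $q$ columns each take every value in $\{0,\dots,s_2-1\}$ equally often; the first $p$ columns are qualitative, the last $q$ quantitative. For quantitative columns a level $x$ is transformed to $(2x+1)/(2s_2)\in[0,1]$. Let $\chi=\prod_k\chi_k$, $\chi_k=\{0,\dots,s_1-1\}$ for $k\le p$, $\chi_k=[0,1]$ for $k>p$, and $F$ the uniform distribution on $\chi$. Kernel: $\mathcal{K}(t,z)=\prod_k\mathcal{K}_k(t_k,z_k)$ with $\mathcal{K}_k=(3/2)^{\delta_{t_kz_k}}(5/4)^{1-\delta_{t_kz_k}}$ for $k\le p$ ($\delta$ the Kronecker delta) and $\mathcal{K}_k=\frac32-|t_k-z_k|+|t_k-z_k|^2$ for $k>p$. For $D$ with (transformed) rows $x_1,\dots,x_n$, the squared qualitative-quantitative discrepancy is $\mathrm{QQD}^2(D)=\int_{\chi^2}\mathcal{K}\,dF\,dF-\frac2n\sum_i\int_\chi\mathcal{K}(t,x_i)dF(t)+\frac1{n^2}\sum_{i,j}\mathcal{K}(x_i,x_j)$. Empty products are $1$. *)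

From Stdlib Require Import Reals List Arith.
From Coquelicot Require Import Coquelicot.
Open Scope R_scope.

(* finite sum  sum_{i<m} f i  and finite product prod_{i=1}^{m} f i (empty = 1) *)
Fixpoint sumR (m : nat) (f : nat -> R) : R :=
  match m with O => 0 | S m' => sumR m' f + f m' end.
Fixpoint prod1R (m : nat) (f : nat -> R) : R :=
  match m with O => 1 | S m' => prod1R m' f * f m end.

Definition count_level (n : nat) (D : nat -> nat -> nat) (k a : nat) : nat :=
  length (filter (fun i => Nat.eqb (D i k) a) (seq 0 n)).

Definition Utype (n p q s1 s2 : nat) (D : nat -> nat -> nat) : Prop :=
  (forall i k, (i < n)%nat -> (k < p)%nat -> (D i k < s1)%nat) /\
  (forall i k, (i < n)%nat -> (p <= k < p + q)%nat -> (D i k < s2)%nat) /\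
  (forall k a, (k < p)%nat -> (a < s1)%nat -> (count_level n D k a * s1 = n)%nat) /\
  (forall k a, (p <= k < p + q)%nat -> (a < s2)%nat -> (count_level n D k a * s2 = n)%nat).

(* points of chi are coordinate vectors t : nat -> R, coordinates 0..p+q-1 *)
Definition upd (x : nat -> R) (k : nat) (a : R) : nat -> R :=
  fun j => if Nat.eqb j k then a else x j.

Definition kern (p q : nat) (t z : nat -> R) : R :=
  prod1R p (fun k => if Req_EM_T (t (k - 1)%nat) (z (k - 1)%nat) then 3/2 else 5/4) *
  prod1R q (fun k => let d := Rabs (t (p + k - 1)%nat - z (p + k - 1)%nat) in
                     3/2 - d + d ^ 2).

(* integration of coordinate k against the uniform marginal of F:
   uniform on {0,...,s1-1} for k < p, Lebesgue on [0,1] for k >= p *)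
Definition integ_coord (p s1 : nat) (k : nat) (f : (nat -> R) -> R) : (nat -> R) -> R :=
  fun x => if Nat.ltb k p
           then / INR s1 * sumR s1 (fun a => f (upd x k (INR a)))
           else RInt (fun u => f (upd x k u)) 0 1.

Fixpoint integ_aux (p s1 : nat) (m : nat) (f : (nat -> R) -> R) : (nat -> R) -> R :=
  match m with
  | O => f
  | S m' => integ_aux p s1 m' (integ_coord p s1 m' f)
  end.

(* int_chi f dF(t)  (as an iterated integral over the coordinates, Fubini) *)
Definition intF (p q s1 : nat) (f : (nat -> R) -> R) : R :=
  integ_aux p s1 (p + q) f (fun _ => 0).

Definition row (p s2 : nat) (D : nat -> nat -> nat) (i : nat) : nat -> R :=
  fun k => if Nat.ltb k p then INR (D i k)
           else (2 * INR (D i k) + 1) / (2 * INR s2).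

Definition QQD2 (n p q s1 s2 : nat) (D : nat -> nat -> nat) : R :=
  intF p q s1 (fun t => intF p q s1 (fun z => kern p q t z))
  - 2 / INR n * sumR n (fun i => intF p q s1 (fun t => kern p q t (row p s2 D i)))
  + 1 / (INR n ^ 2) * sumR n (fun i => sumR n (fun j =>
        kern p q (row p s2 D i) (row p s2 D j))).

Definition prod_term (n q s2 : nat) (m : nat) : R :=
  prod1R m (fun i => Rpower (3/2 - 2 * INR i * (2 * INR s2 - 2 * INR i) / (4 * INR s2 ^ 2))
                            (2 * INR n * INR q / (INR s2 * (INR n - 1)))).

Definition LB_odd (n p q s1 s2 : nat) : R :=
  - ((5 * INR s1 + 1) / (4 * INR s1)) ^ p * (4/3) ^ q
  + 1 / INR n * (3/2) ^ (p + q)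
  + (INR n - 1) / INR n * (5/4) ^ p
    * Rpower (6/5) (INR p * (INR n - INR s1) / (INR s1 * (INR n - 1)))
    * Rpower (3/2) (INR q * (INR n - INR s2) / (INR s2 * (INR n - 1)))
    * prod_term n q s2 ((s2 - 1) / 2).

Definition LB_even (n p q s1 s2 : nat) : R :=
  - ((5 * INR s1 + 1) / (4 * INR s1)) ^ p * (4/3) ^ q
  + 1 / INR n * (3/2) ^ (p + q)
  + (INR n - 1) / INR n * (5/4) ^ p
    * Rpower (6/5) (INR p * (INR n - INR s1) / (INR s1 * (INR n - 1)))
    * Rpower (3/2) (INR q * (INR n - INR s2) / (INR s2 * (INR n - 1)))
    * Rpower (5/4) (INR n * INR q / (INR s2 * (INR n - 1)))
    * prod_term n q s2 (s2 / 2 - 1).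

From Stdlib Require Import Reals Arith Lra Lia List FunctionalExtensionality.
From Coquelicot Require Import Coquelicot.
Open Scope R_scope.

(* The kernel is a product over coordinates, so every integral in QQD^2 factorises
   coordinatewise.  For each row x_i of a U-type design the mixed term
   int K(t, x_i) dF(t) equals the double integral int int K dF dF = prod_k c_k, hence
   QQD^2(D) = - prod_k c_k + n^-2 sum_{i,j} K(x_i, x_j).  The
   diagonal contributes n (3/2)^(p+q); by convexity of exp (the tangent line at the
   mean), the n(n-1) off-diagonal terms are at least n(n-1) times the exponential of
   their mean logarithm.  That mean is exact: ln K is a sum over coordinates, and in
   a balanced column every row meets each level n/s times, so each row's log-sum is
   n sum_k (average of ln K_k over the levels).  For a quantitative column this
   average is a cyclic sum of ln(3/2 - m/s + (m/s)^2) which, by the symmetry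
   m -> s - m, folds into the product appearing in LB_odd and LB_even. *)

Lemma sumR_ext N f g : (forall k, (k < N)%nat -> f k = g k) -> sumR N f = sumR N g.
Proof.
  induction N as [|N IH]; intros H; simpl; auto.
  rewrite IH, H by (intros; try apply H; lia). reflexivity.
Qed.

Lemma sumR_const N c : sumR N (fun _ => c) = INR N * c.
Proof. induction N as [|N IH]; simpl sumR; [simpl; ring|rewrite IH, S_INR; ring]. Qed.

Lemma sumR_scal N c f : sumR N (fun k => c * f k) = c * sumR N f.
Proof. induction N as [|N IH]; simpl; [ring|rewrite IH; ring]. Qed.

Lemma sumR_plus N f g : sumR N (fun k => f k + g k) = sumR N f + sumR N g.
Proof. induction N as [|N IH]; simpl; [ring|rewrite IH; ring]. Qed.

Lemma sumR_minus N f g : sumR N (fun k => f k - g k) = sumR N f - sumR N g.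
Proof. induction N as [|N IH]; simpl; [ring|rewrite IH; ring]. Qed.

Lemma sumR_le N f g : (forall k, (k < N)%nat -> f k <= g k) -> sumR N f <= sumR N g.
Proof.
  induction N as [|N IH]; intros H; simpl; [lra|].
  apply Rplus_le_compat; [apply IH; intros|apply H]; auto.
Qed.

Lemma sumR_add a b f : sumR (a + b) f = sumR a f + sumR b (fun k => f (a + k)%nat).
Proof.
  induction b as [|b IH]; simpl; [rewrite Nat.add_0_r; ring|].
  rewrite Nat.add_succ_r; simpl; rewrite IH; ring.
Qed.

Lemma sumR_front N f : sumR (S N) f = f O + sumR N (fun k => f (S k)).
Proof. induction N as [|N IH]; simpl in *; [ring|rewrite IH; ring]. Qed.

Lemma sumR_rev N f : sumR N f = sumR N (fun k => f (N - S k)%nat).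
Proof.
  induction N as [|N IH]; auto.
  rewrite (sumR_front N (fun k => f (S N - S k)%nat)). simpl. rewrite Nat.sub_0_r, IH. ring.
Qed.

Lemma sumR_swap m n (f : nat -> nat -> R) :
  sumR m (fun i => sumR n (fun j => f i j)) = sumR n (fun j => sumR m (fun i => f i j)).
Proof.
  induction m as [|m IH]; simpl.
  - rewrite sumR_const; simpl; ring.
  - rewrite IH, <- sumR_plus. reflexivity.
Qed.

Lemma sumR_delete N i f : (i < N)%nat ->
  sumR N (fun j => if Nat.eqb j i then 0 else f j) = sumR N f - f i.
Proof.
  induction N as [|N IH]; intros Hi; simpl; [lia|].
  destruct (Nat.eqb_spec N i) as [->|Hne].
  - rewrite (sumR_ext _ _ f); [ring|].
    intros k Hk. destruct (Nat.eqb_spec k i); [lia|auto].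
  - rewrite IH by lia. ring.
Qed.

Lemma sumR_pick N i f : (i < N)%nat ->
  sumR N (fun j => if Nat.eqb i j then f j else 0) = f i.
Proof.
  intros Hi. rewrite (sumR_ext _ _ (fun j => f j - if Nat.eqb j i then 0 else f j)).
  - rewrite sumR_minus, sumR_delete by exact Hi. ring.
  - intros j _. destruct (Nat.eqb_spec i j), (Nat.eqb_spec j i); subst; try lia; ring.
Qed.

Lemma sumR_palindrome_even h g : (forall i, (i < h)%nat -> g (2 * h - S i)%nat = g i) ->
  sumR (2 * h) g = 2 * sumR h g.
Proof.
  intros Hg. replace (2 * h)%nat with (h + h)%nat by lia.
  rewrite sumR_add, (sumR_rev h (fun k => g (h + k)%nat)).
  rewrite (sumR_ext h (fun k => g (h + (h - S k))%nat) g); [ring|].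
  intros i Hi. rewrite <- (Hg i Hi). f_equal. lia.
Qed.

Lemma sumR_palindrome_odd h g : (forall i, (i < h)%nat -> g (2 * h - i)%nat = g i) ->
  sumR (2 * h + 1) g = 2 * sumR h g + g h.
Proof.
  intros Hg. replace (2 * h + 1)%nat with (h + S h)%nat by lia.
  rewrite sumR_add, sumR_front, Nat.add_0_r, (sumR_rev h (fun k => g (h + S k)%nat)).
  rewrite (sumR_ext h (fun k => g (h + S (h - S k)))%nat g); [ring|].
  intros i Hi. rewrite <- (Hg i Hi). f_equal. lia.
Qed.

Lemma sumR_symmetric_odd s h f : s = (2 * h + 1)%nat ->
  (forall m, (0 < m < s)%nat -> f (s - m)%nat = f m) ->
  sumR s f = f O + 2 * sumR h (fun i => f (S i)).
Proof.
  intros -> Hf. replace (2 * h + 1)%nat with (S (2 * h)) by lia.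
  rewrite sumR_front, sumR_palindrome_even; [ring|].
  intros i Hi. rewrite <- (Hf (S i)) by lia. f_equal. lia.
Qed.

Lemma sumR_symmetric_even s h f : s = (2 * h + 2)%nat ->
  (forall m, (0 < m < s)%nat -> f (s - m)%nat = f m) ->
  sumR s f = f O + 2 * sumR h (fun i => f (S i)) + f (S h).
Proof.
  intros -> Hf. replace (2 * h + 2)%nat with (S (2 * h + 1)) by lia.
  rewrite sumR_front, sumR_palindrome_odd; [ring|].
  intros i Hi. rewrite <- (Hf (S i)) by lia. f_equal. lia.
Qed.

Lemma sumR_cyclic s a (g : R -> R) : (a < s)%nat ->
  (forall r, g (- r) = g r) -> (forall r, 0 <= r <= INR s -> g (INR s - r) = g r) ->
  sumR s (fun b => g (INR a - INR b)) = sumR s (fun m => g (INR m)).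
Proof.
  intros Ha Heven Hrefl.
  replace s with (a + (s - a))%nat at 1 by lia.
  replace s with ((s - a) + a)%nat at 2 by lia.
  rewrite !sumR_add, Rplus_comm. f_equal.
  - apply sumR_ext. intros k _. rewrite plus_INR, <- Heven. f_equal. ring.
  - apply sumR_ext. intros b Hb.
    rewrite plus_INR, minus_INR by lia.
    replace (INR s - INR a + INR b) with (INR s - (INR a - INR b)) by ring.
    assert (INR b < INR a) by (apply lt_INR; lia).
    assert (INR a <= INR s) by (apply le_INR; lia).
    pose proof (pos_INR b). symmetry. apply Hrefl. lra.
Qed.

Fixpoint prodR (N : nat) (g : nat -> R) : R :=
  match N with O => 1 | S N' => prodR N' g * g N' end.

Lemma prodR_ext N f g : (forall k, (k < N)%nat -> f k = g k) -> prodR N f = prodR N g.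
Proof.
  induction N as [|N IH]; intros H; simpl; auto.
  rewrite IH, H by (intros; try apply H; lia). reflexivity.
Qed.

Lemma prod1R_prodR N f : prod1R N f = prodR N (fun k => f (S k)).
Proof. induction N as [|N IH]; simpl; congruence. Qed.

Lemma prodR_add a b g : prodR (a + b) g = prodR a g * prodR b (fun k => g (a + k)%nat).
Proof.
  induction b as [|b IH]; simpl; [rewrite Nat.add_0_r; ring|].
  rewrite Nat.add_succ_r; simpl; rewrite IH; ring.
Qed.

Lemma prodR_const N c : prodR N (fun _ => c) = c ^ N.
Proof. induction N as [|N IH]; simpl; [auto|rewrite IH; ring]. Qed.

Lemma prodR_update N m a g : (m < N)%nat ->
  prodR N (fun k => if Nat.eqb k m then a else g k) =
  a * prodR N (fun k => if Nat.eqb k m then 1 else g k).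
Proof.
  induction N as [|N IH]; intros Hm; simpl; [lia|].
  destruct (Nat.eqb_spec N m) as [->|Hne].
  - rewrite !(prodR_ext m (fun k => if Nat.eqb k m then _ else g k) g); [ring| |];
      intros k Hk; destruct (Nat.eqb_spec k m); auto; lia.
  - rewrite IH by lia. ring.
Qed.

Lemma prodR_pos N g : (forall k, 0 < g k) -> 0 < prodR N g.
Proof. induction N; intros H; simpl; [lra|apply Rmult_lt_0_compat; auto]. Qed.

Lemma ln_prodR N g : (forall k, 0 < g k) -> ln (prodR N g) = sumR N (fun k => ln (g k)).
Proof.
  induction N as [|N IH]; intros H; simpl; [apply ln_1|].
  rewrite ln_mult, IH by (auto using prodR_pos). reflexivity.
Qed.

Lemma prodR_exp N g : prodR N (fun k => exp (g k)) = exp (sumR N g).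
Proof. induction N as [|N IH]; simpl; [rewrite exp_0|rewrite IH, exp_plus]; auto. Qed.

Definition coord_integral (p s1 k : nat) (g : R -> R) : R :=
  if Nat.ltb k p then / INR s1 * sumR s1 (fun a => g (INR a)) else RInt g 0 1.

Definition prod_fun (N : nat) (h : nat -> R -> R) (x : nat -> R) : R :=
  prodR N (fun k => h k (x k)).

Lemma integ_coord_prod_fun p s1 N m h : (m < N)%nat ->
  ((p <= m)%nat -> ex_RInt (h m) 0 1) ->
  integ_coord p s1 m (prod_fun N h) =
  prod_fun N (fun k => if Nat.eqb k m then fun _ => coord_integral p s1 m (h m) else h k).
Proof.
  intros Hm Hint. apply functional_extensionality; intro x.
  unfold integ_coord, prod_fun, coord_integral.
  set (P := prodR N (fun k => if Nat.eqb k m then 1 else h k (x k))).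
  assert (Hupd : forall u, prodR N (fun k => h k (upd x m u k)) = P * h m u).
  { intro u. rewrite Rmult_comm. unfold P. rewrite <- prodR_update by exact Hm.
    apply prodR_ext. intros k _. unfold upd. destruct (Nat.eqb_spec k m) as [->|]; auto. }
  assert (Hconst : forall c, prodR N (fun k => (if Nat.eqb k m then fun _ => c else h k) (x k)) = c * P).
  { intro c. unfold P. rewrite <- prodR_update by exact Hm.
    apply prodR_ext. intros k _. destruct (Nat.eqb k m); auto. }
  rewrite Hconst. destruct (Nat.ltb_spec m p).
  - rewrite (sumR_ext _ _ (fun a => P * h m (INR a))) by (intros; apply Hupd).
    rewrite sumR_scal. ring.
  - rewrite (RInt_ext _ (fun u => scal P (h m u))) by (intros; apply Hupd).
    rewrite (RInt_scal (h m)) by auto. apply Rmult_comm.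
Qed.

Lemma integ_aux_prod_fun p s1 N m h : (m <= N)%nat ->
  (forall k, (p <= k < N)%nat -> ex_RInt (h k) 0 1) ->
  integ_aux p s1 m (prod_fun N h) =
  prod_fun N (fun k => if Nat.ltb k m then fun _ => coord_integral p s1 k (h k) else h k).
Proof.
  revert h. induction m as [|m IH]; intros h Hm Hint; [reflexivity|].
  simpl integ_aux. rewrite integ_coord_prod_fun, IH.
  2: lia.
  2:{ intros k Hk. destruct (Nat.eqb k m); [apply ex_RInt_const|apply Hint; lia]. }
  2: lia.
  2:{ intros Hpm. apply Hint. lia. }
  f_equal. apply functional_extensionality; intro k.
  destruct (Nat.eqb_spec k m), (Nat.ltb_spec k m), (Nat.ltb_spec k (S m));
    subst; auto; lia.
Qed.

Lemma intF_prod_fun p q s1 h : (forall k, (p <= k < p + q)%nat -> ex_RInt (h k) 0 1) ->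
  intF p q s1 (prod_fun (p + q) h) = prodR (p + q) (fun k => coord_integral p s1 k (h k)).
Proof.
  intros Hint. unfold intF. rewrite integ_aux_prod_fun by auto.
  apply prodR_ext. intros k Hk. destruct (Nat.ltb_spec k (p + q)); [auto|lia].
Qed.

Definition qual_kern (v w : R) : R := if Req_EM_T v w then 3/2 else 5/4.

Definition quant_kern (d : R) : R := 3/2 - d + d ^ 2.

Definition kern_coord (p k : nat) (v w : R) : R :=
  if Nat.ltb k p then qual_kern v w else quant_kern (Rabs (v - w)).

Lemma kern_prodR p q t z : kern p q t z = prodR (p + q) (fun k => kern_coord p k (t k) (z k)).
Proof.
  unfold kern. rewrite prodR_add, !prod1R_prodR.
  f_equal; apply prodR_ext; intros k Hk; unfold kern_coord.
  - replace (S k - 1)%nat with k by lia. destruct (Nat.ltb_spec k p); [auto|lia].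
  - replace (p + S k - 1)%nat with (p + k)%nat by lia.
    destruct (Nat.ltb_spec (p + k) p); [lia|auto].
Qed.

Lemma quant_kern_ge d : 5/4 <= quant_kern d.
Proof. unfold quant_kern. pose proof (pow2_ge_0 (d - 1/2)). nra. Qed.

Lemma quant_kern_reflect d : quant_kern (1 - d) = quant_kern d.
Proof. unfold quant_kern. ring. Qed.

Lemma kern_coord_ge p k v w : 5/4 <= kern_coord p k v w.
Proof.
  unfold kern_coord, qual_kern. destruct (Nat.ltb k p); [|apply quant_kern_ge].
  destruct (Req_EM_T v w); lra.
Qed.

Lemma kern_coord_diag p k v : kern_coord p k v v = 3/2.
Proof.
  unfold kern_coord, qual_kern, quant_kern. destruct (Nat.ltb k p).
  - destruct (Req_EM_T v v); [auto|congruence].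
  - rewrite Rminus_diag, Rabs_R0. ring.
Qed.

Lemma kern_coord_sym p k v w : kern_coord p k v w = kern_coord p k w v.
Proof.
  unfold kern_coord, qual_kern. destruct (Nat.ltb k p).
  - destruct (Req_EM_T v w), (Req_EM_T w v); congruence.
  - rewrite Rabs_minus_sym. reflexivity.
Qed.

Lemma kern_sym p q t z : kern p q t z = kern p q z t.
Proof. rewrite !kern_prodR. apply prodR_ext. intros. apply kern_coord_sym. Qed.

Lemma kern_pos p q t z : 0 < kern p q t z.
Proof.
  rewrite kern_prodR. apply prodR_pos. intros k.
  pose proof (kern_coord_ge p k (t k) (z k)). lra.
Qed.

Lemma kern_diag p q t : kern p q t t = (3/2) ^ (p + q).
Proof. rewrite kern_prodR, <- prodR_const. apply prodR_ext. intros. apply kern_coord_diag. Qed.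

Lemma ln_kern p q t z :
  ln (kern p q t z) = sumR (p + q) (fun k => ln (kern_coord p k (t k) (z k))).
Proof.
  rewrite kern_prodR. apply ln_prodR. intros k.
  pose proof (kern_coord_ge p k (t k) (z k)). lra.
Qed.

Lemma sumR_qual_kern s b f : (b < s)%nat ->
  sumR s (fun a => f (qual_kern (INR b) (INR a))) = f (3/2) + (INR s - 1) * f (5/4).
Proof.
  induction s as [|s IH]; intros Hb; [lia|].
  simpl sumR. rewrite S_INR. unfold qual_kern at 2.
  destruct (Nat.eq_dec b s) as [->|Hne].
  - destruct (Req_EM_T (INR s) (INR s)); [|congruence].
    rewrite (sumR_ext _ _ (fun _ => f (5/4))), sumR_const; [ring|].
    intros a Ha. unfold qual_kern.
    destruct (Req_EM_T (INR s) (INR a)) as [E|]; [apply INR_eq in E; lia|auto].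
  - rewrite IH by lia.
    destruct (Req_EM_T (INR b) (INR s)) as [E|]; [apply INR_eq in E; lia|ring].
Qed.

Lemma quant_kern_continuous v w : continuous (fun w => quant_kern (Rabs (v - w))) w.
Proof.
  apply (continuous_comp (fun w => Rabs (v - w)) quant_kern).
  - apply continuous_Rabs_comp.
    apply (ex_derive_continuous (K := R_AbsRing) (V := R_NormedModule)). auto_derive. auto.
  - apply (ex_derive_continuous (K := R_AbsRing) (V := R_NormedModule)).
    unfold quant_kern. auto_derive. auto.
Qed.

Lemma is_RInt_quant_kern v : 0 <= v <= 1 ->
  is_RInt (fun w => quant_kern (Rabs (v - w))) 0 1 (4/3).
Proof.
  intros Hv.
  set (P := fun d => 3/2 * d - d ^ 2 / 2 + d ^ 3 / 3).
  assert (Hleft : is_RInt (fun w => quant_kern (Rabs (v - w))) 0 v (P v - P 0)).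
  { apply (is_RInt_ext (fun w => quant_kern (v - w))).
    - intros w Hw. rewrite Rmin_left, Rmax_right in Hw by lra.
      rewrite Rabs_pos_eq by lra. reflexivity.
    - replace (P v - P 0) with (minus (- P (v - v)) (- P (v - 0))) by
        (unfold minus, plus, opp; simpl; rewrite Rminus_diag, Rminus_0_r; ring).
      apply (is_RInt_derive (V := R_CompleteNormedModule) (fun w => - P (v - w))).
      + intros w _. unfold P, quant_kern. auto_derive; [auto|field].
      + intros w _. apply (ex_derive_continuous (K := R_AbsRing) (V := R_NormedModule)).
        unfold quant_kern. auto_derive. auto. }
  assert (Hright : is_RInt (fun w => quant_kern (Rabs (v - w))) v 1 (P (1 - v) - P 0)).
  { apply (is_RInt_ext (fun w => quant_kern (w - v))).
    - intros w Hw. rewrite Rmin_left, Rmax_right in Hw by lra.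
      rewrite Rabs_minus_sym, Rabs_pos_eq by lra. reflexivity.
    - replace (P (1 - v) - P 0) with (minus (P (1 - v)) (P (v - v))) by
        (unfold minus, plus, opp; simpl; rewrite Rminus_diag; ring).
      apply (is_RInt_derive (V := R_CompleteNormedModule) (fun w => P (w - v))).
      + intros w _. unfold P, quant_kern. auto_derive; [auto|field].
      + intros w _. apply (ex_derive_continuous (K := R_AbsRing) (V := R_NormedModule)).
        unfold quant_kern. auto_derive. auto. }
  replace (4/3) with (plus (P v - P 0) (P (1 - v) - P 0)) by (unfold plus, P; simpl; field).
  exact (is_RInt_Chasles _ _ _ _ _ _ Hleft Hright).
Qed.

Definition coord_ok (p s1 k : nat) (v : R) : Prop :=
  if Nat.ltb k p then exists b, (b < s1)%nat /\ v = INR b else 0 <= v <= 1.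

Definition coord_mean (p s1 k : nat) : R :=
  if Nat.ltb k p then (5 * INR s1 + 1) / (4 * INR s1) else 4/3.

Lemma coord_integral_kern_coord p s1 k v : coord_ok p s1 k v ->
  coord_integral p s1 k (kern_coord p k v) = coord_mean p s1 k.
Proof.
  unfold coord_ok, coord_integral, coord_mean, kern_coord.
  destruct (Nat.ltb_spec k p); intros Hv.
  - destruct Hv as [b [Hb ->]].
    assert (0 < INR s1) by (apply lt_0_INR; lia).
    rewrite (sumR_qual_kern s1 b (fun y => y)) by exact Hb. field. lra.
  - apply is_RInt_unique, is_RInt_quant_kern, Hv.
Qed.

Lemma coord_integral_const p s1 k g c : (1 <= s1)%nat ->
  (forall v, coord_ok p s1 k v -> g v = c) -> coord_integral p s1 k g = c.
Proof.
  unfold coord_ok, coord_integral. intros Hs1.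
  destruct (Nat.ltb_spec k p); intros Hg.
  - assert (0 < INR s1) by (apply lt_0_INR; lia).
    rewrite (sumR_ext _ _ (fun _ => c)), sumR_const by (intros a Ha; apply Hg; eauto).
    field. lra.
  - rewrite (RInt_ext _ (fun _ => c)), RInt_const.
    + unfold scal; simpl; unfold mult; simpl. ring.
    + intros w Hw. rewrite Rmin_left, Rmax_right in Hw by lra. apply Hg. lra.
Qed.

Lemma prodR_coord_mean p q s1 :
  prodR (p + q) (coord_mean p s1) = ((5 * INR s1 + 1) / (4 * INR s1)) ^ p * (4/3) ^ q.
Proof.
  rewrite prodR_add, <- !prodR_const. unfold coord_mean.
  f_equal; apply prodR_ext; intros k Hk.
  - destruct (Nat.ltb_spec k p); [auto|lia].
  - destruct (Nat.ltb_spec (p + k) p); [lia|auto].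
Qed.

Lemma intF_kern p q s1 t :
  intF p q s1 (fun z => kern p q t z) =
  prodR (p + q) (fun k => coord_integral p s1 k (kern_coord p k (t k))).
Proof.
  replace (fun z => kern p q t z) with (prod_fun (p + q) (fun k => kern_coord p k (t k))).
  - apply intF_prod_fun. intros k Hk.
    apply (ex_RInt_ext (fun w => quant_kern (Rabs (t k - w)))).
    + intros w _. unfold kern_coord. destruct (Nat.ltb_spec k p); [lia|auto].
    + apply (ex_RInt_continuous (V := R_CompleteNormedModule)).
      intros w _. apply quant_kern_continuous.
  - apply functional_extensionality. intro z. symmetry. apply kern_prodR.
Qed.

Lemma intF_kern_ok p q s1 z : (forall k, (k < p + q)%nat -> coord_ok p s1 k (z k)) ->
  intF p q s1 (fun t => kern p q t z) = prodR (p + q) (coord_mean p s1).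
Proof.
  intros Hz. rewrite (functional_extensionality _ (fun t => kern p q z t)) by
    (intro; apply kern_sym).
  rewrite intF_kern. apply prodR_ext. intros k Hk.
  apply coord_integral_kern_coord, Hz, Hk.
Qed.

Lemma intF_intF_kern p q s1 : (1 <= s1)%nat ->
  intF p q s1 (fun t => intF p q s1 (fun z => kern p q t z)) = prodR (p + q) (coord_mean p s1).
Proof.
  intros Hs1.
  assert (Hmean : forall k, coord_integral p s1 k
      (fun v => coord_integral p s1 k (kern_coord p k v)) = coord_mean p s1 k).
  { intros k. apply coord_integral_const; [exact Hs1|].
    intros v Hv. apply coord_integral_kern_coord, Hv. }
  replace (fun t => intF p q s1 (fun z => kern p q t z)) with
    (prod_fun (p + q) (fun k v => coord_integral p s1 k (kern_coord p k v))).
  - rewrite intF_prod_fun.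
    + apply prodR_ext. intros k _. apply Hmean.
    + intros k Hk. apply (ex_RInt_ext (fun _ => 4/3)); [|apply ex_RInt_const].
      intros w Hw. rewrite Rmin_left, Rmax_right in Hw by lra.
      symmetry. rewrite coord_integral_kern_coord; unfold coord_mean, coord_ok;
        destruct (Nat.ltb_spec k p); auto; try lia; lra.
  - apply functional_extensionality. intro t. symmetry. apply intF_kern.
Qed.

Lemma count_level_sumR n D k b :
  INR (count_level n D k b) = sumR n (fun j => if Nat.eqb (D j k) b then 1 else 0).
Proof.
  induction n as [|n IH]; [reflexivity|].
  unfold count_level in *. rewrite seq_S, filter_app, length_app, plus_INR, IH.
  simpl. destruct (Nat.eqb (D n k) b); simpl; ring.
Qed.

Lemma sumR_balanced_column n s D k (psi : nat -> R) : (1 <= s)%nat ->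
  (forall j, (j < n)%nat -> (D j k < s)%nat) ->
  (forall b, (b < s)%nat -> (count_level n D k b * s = n)%nat) ->
  sumR n (fun j => psi (D j k)) = INR n / INR s * sumR s psi.
Proof.
  intros Hs Hlev Hbal.
  assert (0 < INR s) by (apply lt_0_INR; lia).
  rewrite (sumR_ext n _ (fun j => sumR s (fun b => if Nat.eqb (D j k) b then psi b else 0)))
    by (intros; symmetry; apply sumR_pick; auto).
  rewrite sumR_swap, <- sumR_scal. apply sumR_ext. intros b Hb.
  rewrite (sumR_ext n _ (fun j => psi b * (if Nat.eqb (D j k) b then 1 else 0))) by
    (intros j _; destruct (Nat.eqb (D j k) b); ring).
  assert (Hcount : INR (count_level n D k b) * INR s = INR n) by
    (rewrite <- mult_INR, Hbal; auto).
  rewrite sumR_scal, <- count_level_sumR, <- Hcount. field. lra.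
Qed.

Definition quant_log (s : nat) (r : R) : R := ln (quant_kern (Rabs r / INR s)).

Definition quant_log_sum (s : nat) : R := sumR s (fun m => quant_log s (INR m)).

Definition coord_log_mean (p s1 s2 k : nat) : R :=
  if Nat.ltb k p then (ln (3/2) + (INR s1 - 1) * ln (5/4)) / INR s1
  else quant_log_sum s2 / INR s2.

Lemma quant_log_reflect s r : (1 <= s)%nat -> 0 <= r <= INR s ->
  quant_log s (INR s - r) = quant_log s r.
Proof.
  intros Hs Hr. assert (0 < INR s) by (apply lt_0_INR; lia).
  unfold quant_log. rewrite !Rabs_pos_eq by lra.
  rewrite <- quant_kern_reflect. f_equal. f_equal. field. lra.
Qed.

Lemma sumR_coord_log_mean p q s1 s2 : sumR (p + q) (coord_log_mean p s1 s2) =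
  INR p * ((ln (3/2) + (INR s1 - 1) * ln (5/4)) / INR s1) + INR q * (quant_log_sum s2 / INR s2).
Proof.
  rewrite sumR_add, <- !sumR_const. unfold coord_log_mean.
  f_equal; apply sumR_ext; intros k Hk.
  - destruct (Nat.ltb_spec k p); [auto|lia].
  - destruct (Nat.ltb_spec (p + k) p); [lia|auto].
Qed.

Lemma exp_tangent_le a m : exp m * (1 + a - m) <= exp a.
Proof.
  replace (exp a) with (exp m * exp (a - m)) by (rewrite <- exp_plus; f_equal; ring).
  apply Rmult_le_compat_l; [apply Rlt_le, exp_pos|].
  pose proof (exp_ineq1_le (a - m)). lra.
Qed.

Lemma sumR_offdiag_ge_exp n (K : nat -> nat -> R) : (2 <= n)%nat -> (forall i j, 0 < K i j) ->
  INR n * (INR n - 1) *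
    exp (sumR n (fun i => sumR n (fun j => ln (K i j)) - ln (K i i)) / (INR n * (INR n - 1)))
  <= sumR n (fun i => sumR n (fun j => K i j) - K i i).
Proof.
  intros Hn HK. assert (1 < INR n) by (apply lt_1_INR; lia).
  set (L := sumR n (fun i => sumR n (fun j => ln (K i j)) - ln (K i i))).
  set (m := L / (INR n * (INR n - 1))).
  set (t := fun i j => exp m * (1 - m) + exp m * ln (K i j)).
  apply Rle_trans with (sumR n (fun i => sumR n (fun j => t i j) - t i i)).
  - right. unfold t.
    rewrite (sumR_ext _ _ (fun i => exp m * ((INR n - 1) * (1 - m)
      + (sumR n (fun j => ln (K i j)) - ln (K i i))))).
    + rewrite sumR_scal, sumR_plus, sumR_const. fold L. unfold m. field. lra.
    + intros i _. rewrite sumR_plus, sumR_const, sumR_scal. ring.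
  - apply sumR_le. intros i Hi. rewrite <- !sumR_delete by exact Hi.
    apply sumR_le. intros j _. destruct (Nat.eqb j i); [lra|].
    pose proof (exp_tangent_le (ln (K i j)) m) as Htan.
    rewrite exp_ln in Htan by apply HK. unfold t. lra.
Qed.

(* The mean of ln K(x_i, x_j) over the n(n-1) pairs i <> j of rows of a U-type design. *)
Definition log_kern_mean (n p q s1 s2 : nat) : R :=
  (INR n * sumR (p + q) (coord_log_mean p s1 s2) - INR (p + q) * ln (3/2)) / (INR n - 1).

Section Design.

Variables (n p q s1 s2 : nat) (D : nat -> nat -> nat).
Hypotheses (Hn : (2 <= n)%nat) (Hs1 : (1 <= s1)%nat) (Hs2 : (1 <= s2)%nat)
  (HD : Utype n p q s1 s2 D).

Lemma row_qual i k : (k < p)%nat -> row p s2 D i k = INR (D i k).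
Proof. intros Hk. unfold row. destruct (Nat.ltb_spec k p); [auto|lia]. Qed.

Lemma row_quant_dist i j k : (p <= k)%nat ->
  Rabs (row p s2 D i k - row p s2 D j k) = Rabs (INR (D i k) - INR (D j k)) / INR s2.
Proof.
  intros Hk. assert (0 < INR s2) by (apply lt_0_INR; lia).
  unfold row. destruct (Nat.ltb_spec k p); [lia|].
  replace ((2 * INR (D i k) + 1) / (2 * INR s2) - (2 * INR (D j k) + 1) / (2 * INR s2))
    with ((INR (D i k) - INR (D j k)) * / INR s2) by (field; lra).
  rewrite Rabs_mult, (Rabs_pos_eq (/ INR s2)); [reflexivity|].
  apply Rlt_le, Rinv_0_lt_compat. lra.
Qed.

Lemma row_ok i k : (i < n)%nat -> (k < p + q)%nat -> coord_ok p s1 k (row p s2 D i k).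
Proof.
  destruct HD as [Hqual [Hquant _]]. intros Hi Hk.
  unfold coord_ok, row. destruct (Nat.ltb_spec k p); [eauto|].
  assert (Hlev : (S (D i k) <= s2)%nat) by (apply Hquant; lia).
  apply le_INR in Hlev. rewrite S_INR in Hlev.
  pose proof (pos_INR (D i k)). split.
  - apply Rdiv_le_0_compat; lra.
  - apply (Rdiv_le_1 (2 * INR (D i k) + 1) (2 * INR s2)); lra.
Qed.

Lemma QQD2_rows :
  QQD2 n p q s1 s2 D = - prodR (p + q) (coord_mean p s1)
    + / INR n ^ 2 * sumR n (fun i => sumR n (fun j => kern p q (row p s2 D i) (row p s2 D j))).
Proof.
  assert (0 < INR n) by (apply lt_0_INR; lia).
  unfold QQD2. rewrite intF_intF_kern by exact Hs1.
  rewrite (sumR_ext _ _ (fun _ => prodR (p + q) (coord_mean p s1))), sumR_const.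
  - field. lra.
  - intros i Hi. apply intF_kern_ok. intros k Hk. apply row_ok; auto.
Qed.

Lemma sumR_ln_kern_coord_column i k : (i < n)%nat -> (k < p + q)%nat ->
  sumR n (fun j => ln (kern_coord p k (row p s2 D i k) (row p s2 D j k))) =
  INR n * coord_log_mean p s1 s2 k.
Proof.
  destruct HD as [Hqual [Hquant [Hbal1 Hbal2]]]. intros Hi Hk.
  assert (0 < INR s1) by (apply lt_0_INR; lia).
  assert (0 < INR s2) by (apply lt_0_INR; lia).
  unfold kern_coord, coord_log_mean. destruct (Nat.ltb_spec k p).
  - rewrite (sumR_ext _ _ (fun j => ln (qual_kern (INR (D i k)) (INR (D j k))))) by
      (intros; rewrite !row_qual; auto).
    rewrite (sumR_balanced_column n s1 D k (fun b => ln (qual_kern (INR (D i k)) (INR b))))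
      by (auto; intros; first [apply Hqual | apply Hbal1]; auto).
    rewrite sumR_qual_kern by auto. field. lra.
  - rewrite (sumR_ext _ _ (fun j => quant_log s2 (INR (D i k) - INR (D j k)))) by
      (intros; rewrite row_quant_dist by lia; reflexivity).
    rewrite (sumR_balanced_column n s2 D k (fun b => quant_log s2 (INR (D i k) - INR b)))
      by (auto; intros; first [apply Hquant | apply Hbal2]; lia).
    rewrite sumR_cyclic.
    + unfold quant_log_sum. field. lra.
    + apply Hquant; lia.
    + intros r. unfold quant_log. rewrite Rabs_Ropp. reflexivity.
    + intros r Hr. apply quant_log_reflect; auto.
Qed.

Lemma sumR_ln_kern_rows i : (i < n)%nat ->
  sumR n (fun j => ln (kern p q (row p s2 D i) (row p s2 D j))) =
  INR n * sumR (p + q) (coord_log_mean p s1 s2).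
Proof.
  intros Hi.
  rewrite (sumR_ext _ _ (fun j => sumR (p + q) (fun k =>
    ln (kern_coord p k (row p s2 D i k) (row p s2 D j k))))) by (intros; apply ln_kern).
  rewrite sumR_swap, <- sumR_scal. apply sumR_ext. intros k Hk.
  apply sumR_ln_kern_coord_column; auto.
Qed.

Lemma QQD2_ge_exp :
  QQD2 n p q s1 s2 D >= - prodR (p + q) (coord_mean p s1) + 1 / INR n * (3/2) ^ (p + q)
    + (INR n - 1) / INR n * exp (log_kern_mean n p q s1 s2).
Proof.
  assert (1 < INR n) by (apply lt_1_INR; lia).
  set (K := fun i j => kern p q (row p s2 D i) (row p s2 D j)).
  assert (Hlog : sumR n (fun i => sumR n (fun j => ln (K i j)) - ln (K i i)) / (INR n * (INR n - 1))
    = log_kern_mean n p q s1 s2).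
  { rewrite (sumR_ext _ _ (fun _ => INR n * sumR (p + q) (coord_log_mean p s1 s2)
      - INR (p + q) * ln (3/2))), sumR_const.
    - unfold log_kern_mean. field. lra.
    - intros i Hi. unfold K.
      rewrite sumR_ln_kern_rows, kern_diag, ln_pow by (auto; lra). reflexivity. }
  assert (Hsplit : sumR n (fun i => sumR n (fun j => K i j))
    = INR n * (3/2) ^ (p + q) + sumR n (fun i => sumR n (fun j => K i j) - K i i)).
  { rewrite sumR_minus, (sumR_ext n (fun i => K i i) (fun _ => (3/2) ^ (p + q))), sumR_const.
    - ring.
    - intros. apply kern_diag. }
  pose proof (sumR_offdiag_ge_exp n K Hn (fun i j => kern_pos p q _ _)) as Hoff.
  rewrite Hlog in Hoff.
  rewrite QQD2_rows. unfold K in Hsplit, Hoff. rewrite Hsplit.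
  apply Rle_ge.
  replace (- prodR (p + q) (coord_mean p s1) + 1 / INR n * (3/2) ^ (p + q)
      + (INR n - 1) / INR n * exp (log_kern_mean n p q s1 s2))
    with (- prodR (p + q) (coord_mean p s1) + / INR n ^ 2 * (INR n * (3/2) ^ (p + q)
      + INR n * (INR n - 1) * exp (log_kern_mean n p q s1 s2))) by (field; lra).
  apply Rplus_le_compat_l, Rmult_le_compat_l; [|lra].
  apply Rlt_le, Rinv_0_lt_compat, pow_lt. lra.
Qed.

End Design.

Lemma prod_term_exp n q s2 h : (1 <= s2)%nat ->
  prod_term n q s2 h = exp (2 * INR n * INR q / (INR s2 * (INR n - 1))
    * sumR h (fun i => quant_log s2 (INR (S i)))).
Proof.
  intros Hs2. assert (0 < INR s2) by (apply lt_0_INR; lia).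
  unfold prod_term. rewrite prod1R_prodR, <- sumR_scal, <- prodR_exp.
  apply prodR_ext. intros k _. unfold Rpower, quant_log, quant_kern.
  rewrite Rabs_pos_eq by apply pos_INR. do 3 f_equal. field. lra.
Qed.

Lemma quant_log_0 s : quant_log s 0 = ln (3/2).
Proof. unfold quant_log, quant_kern. rewrite Rabs_R0. f_equal. unfold Rdiv. ring. Qed.

Lemma quant_log_symmetric s m : (1 <= s)%nat -> (0 < m < s)%nat ->
  quant_log s (INR (s - m)) = quant_log s (INR m).
Proof.
  intros Hs Hm. rewrite minus_INR by lia. apply quant_log_reflect; [exact Hs|].
  split; [apply pos_INR|apply le_INR; lia].
Qed.

Lemma quant_log_sum_odd s h : s = (2 * h + 1)%nat ->
  quant_log_sum s = ln (3/2) + 2 * sumR h (fun i => quant_log s (INR (S i))).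
Proof.
  intros Hs. unfold quant_log_sum.
  rewrite (sumR_symmetric_odd s h (fun m => quant_log s (INR m))), quant_log_0 by
    (auto; intros; apply quant_log_symmetric; lia).
  reflexivity.
Qed.

Lemma quant_log_sum_even s h : s = (2 * h + 2)%nat ->
  quant_log_sum s = ln (3/2) + 2 * sumR h (fun i => quant_log s (INR (S i))) + ln (5/4).
Proof.
  intros Hs. unfold quant_log_sum.
  rewrite (sumR_symmetric_even s h (fun m => quant_log s (INR m))), quant_log_0 by
    (auto; intros; apply quant_log_symmetric; lia).
  unfold quant_log, quant_kern. rewrite Rabs_pos_eq by apply pos_INR.
  replace (INR (S h) / INR s) with (1/2).
  - do 2 f_equal. field.
  - subst s. rewrite S_INR, plus_INR, mult_INR. simpl. field.
    pose proof (pos_INR h). lra.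
Qed.

Lemma ln_6_5 : ln (6/5) = ln (3/2) - ln (5/4).
Proof. rewrite <- ln_div by lra. f_equal. field. Qed.

Lemma LB_odd_exp n p q s1 s2 h : (2 <= n)%nat -> (1 <= s1)%nat -> s2 = (2 * h + 1)%nat ->
  LB_odd n p q s1 s2 = - prodR (p + q) (coord_mean p s1) + 1 / INR n * (3/2) ^ (p + q)
    + (INR n - 1) / INR n * exp (log_kern_mean n p q s1 s2).
Proof.
  intros Hn Hs1 Hs2.
  assert (1 < INR n) by (apply lt_1_INR; lia).
  assert (0 < INR s1) by (apply lt_0_INR; lia).
  assert (0 < INR s2) by (apply lt_0_INR; lia).
  assert (Hh : ((s2 - 1) / 2)%nat = h) by (subst s2; rewrite Nat.add_sub, Nat.mul_comm, Nat.div_mul; lia).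
  unfold LB_odd, log_kern_mean. rewrite Hh, prodR_coord_mean, prod_term_exp by lia.
  rewrite sumR_coord_log_mean, (quant_log_sum_odd s2 h Hs2), <- (Rpower_pow p (5/4)) by lra.
  unfold Rpower. rewrite ln_6_5, !Rmult_assoc, <- !exp_plus, plus_INR.
  rewrite Ropp_mult_distr_l. do 3 f_equal. field. repeat split; lra.
Qed.

Lemma LB_even_exp n p q s1 s2 h : (2 <= n)%nat -> (1 <= s1)%nat -> s2 = (2 * h + 2)%nat ->
  LB_even n p q s1 s2 = - prodR (p + q) (coord_mean p s1) + 1 / INR n * (3/2) ^ (p + q)
    + (INR n - 1) / INR n * exp (log_kern_mean n p q s1 s2).
Proof.
  intros Hn Hs1 Hs2.
  assert (1 < INR n) by (apply lt_1_INR; lia).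
  assert (0 < INR s1) by (apply lt_0_INR; lia).
  assert (0 < INR s2) by (apply lt_0_INR; lia).
  assert (Hh : (s2 / 2 - 1)%nat = h) by
    (subst s2; replace (2 * h + 2)%nat with ((h + 1) * 2)%nat by lia; rewrite Nat.div_mul; lia).
  unfold LB_even, log_kern_mean. rewrite Hh, prodR_coord_mean, prod_term_exp by lia.
  rewrite sumR_coord_log_mean, (quant_log_sum_even s2 h Hs2), <- (Rpower_pow p (5/4)) by lra.
  unfold Rpower. rewrite ln_6_5, !Rmult_assoc, <- !exp_plus, plus_INR.
  rewrite Ropp_mult_distr_l. do 3 f_equal. field. repeat split; lra.
Qed.

Theorem corollary2 (n p q s1 s2 : nat) (D : nat -> nat -> nat) :
  (2 <= n)%nat -> (1 <= s1)%nat -> (1 <= s2)%nat ->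
  Utype n p q s1 s2 D ->
  (Nat.odd s2 = true -> QQD2 n p q s1 s2 D >= LB_odd n p q s1 s2) /\
  (Nat.even s2 = true -> QQD2 n p q s1 s2 D >= LB_even n p q s1 s2).
Proof.
  intros Hn Hs1 Hs2 HD. split.
  - intros Hodd. apply Nat.odd_spec in Hodd as [h Hh].
    rewrite (LB_odd_exp n p q s1 s2 h) by (auto; lia).
    apply QQD2_ge_exp; auto.
  - intros Heven. apply Nat.even_spec in Heven as [m Hm].
    rewrite (LB_even_exp n p q s1 s2 (m - 1)) by (auto; lia).
    apply QQD2_ge_exp; auto.
Qed.
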